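(* Let $G$ be a complete edge-colored permutation graph. Then for each strong module $M$ of $G$, the quotient graph $G[M]/\mathbb{P}_{\max}(M)$ is a complete edge-colored permutation graph.
   Context: A complete $k$-edge-colored graph $G=(V,E_1,\dots,E_k)$ is the complete graph on a finite set $V$ whose edges are partitioned into $k$ nonempty color classes $E_i$ (the one-vertex graph also counts); $G_{|i}=(V,E_i)$. A labeling is a bijection $\ell:V\to\{1,\dots,|V|\}$. A graph $(V,E)$ with labeling $\ell$ is a simple permutation graph of a permutation $\pi$ if for all $u,v$ with $\ell(u)>\ell(v)$: $\{u,v\}\in E$ iff $\pi^{-1}(\ell(u))<\pi^{-1}(\ell(v))$. $G$ is a complete edge-colored permutation graph if there exist a labeling $\ell$ and permutations $\pi_1,\dots,\pi_k$ with $(G_{|i},\ell)$ a simple permutation graph of $\pi_i$ for all $i$. A module is a set $M\subseteq V$ such that for every $v\notin M$ all edges $\{u,v\}$, $u\in M$, have the same color; a strong module is a nonempty module not overlapping (i.e., comparable by inclusion or disjoint with) any other module. For a strong module $M$ with $|M|\ge2$, $\mathbb{P}_{\max}(M)$ is the set of inclusion-maximal strong modules properly contained in $M$ (a partition of $M$), and $G[M]/\mathbb{P}_{\max}(M)$ is the complete graph on $\mathbb{P}_{\max}(M)$ where $\{M_a,M_b\}$ has the common color of all edges between $M_a$ and $M_b$; for $|M|=1$ the quotient is the one-vertex graph. *)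

From mathcomp Require Import all_boot all_fingroup.
Set Implicit Arguments. Unset Strict Implicit. Unset Printing Implicit Defensive.

(* A complete k-edge-colored graph on a finite vertex type V is given by a
   colouring col : V -> V -> 'I_k of the pairs; only values on pairs u != v
   matter, and they must be symmetric. *)

Section Defs.
Variable V : finType.
Variable k : nat.

Definition complete_edge_colored (col : V -> V -> 'I_k) : Prop :=
  [/\ 0 < #|V|,
      (forall u v : V, u != v -> col u v = col v u) &
      (#|V| = 1 \/ forall i : 'I_k, exists u v : V, u != v /\ col u v = i)].

End Defs.

Section Perm.
Variable V : finType.
Variable K : eqType.
Definition simple_perm_graph (E : rel V) (l : V -> 'I_#|V|)
    (pi : {perm 'I_#|V|}) : Prop :=
  forall u v : V, l v < l u -> E u v = ((pi^-1)%g (l u) < (pi^-1)%g (l v)).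

Definition cec_perm_graph (col : V -> V -> K) : Prop :=
  exists l : V -> 'I_#|V|, bijective l /\
    forall i : K, exists pi : {perm 'I_#|V|},
      simple_perm_graph (fun u v => col u v == i) l pi.

End Perm.

Section Mod.
Variable V : finType.
Variable k : nat.
Definition is_module (col : V -> V -> 'I_k) (M : {set V}) : bool :=
  [forall u in M, forall w in M, forall v in ~: M, col u v == col w v].

Definition strong_module (col : V -> V -> 'I_k) (M : {set V}) : bool :=
  [&& M != set0, is_module col M &
      [forall M' : {set V}, is_module col M' ==>
         [|| M \subset M', M' \subset M | [disjoint M & M']]]].

Definition Pmax (col : V -> V -> 'I_k) (M : {set V}) : {set {set V}} :=
  [set M' : {set V} | [&& strong_module col M', M' \proper M &
     [forall M'' : {set V}, (strong_module col M'' && (M' \proper M''))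
                              ==> ~~ (M'' \proper M)]]].

Definition qparts (col : V -> V -> 'I_k) (M : {set V}) : {set {set V}} :=
  if #|M| <= 1 then [set M] else Pmax col M.

Definition qvert (col : V -> V -> 'I_k) (M : {set V}) : finType :=
  {X : {set V} | X \in qparts col M}.

(* colour of {Ma, Mb}: the common colour of the edges between Ma and Mb,
   evaluated on chosen representatives.  The option is only there to make
   the function total: parts are nonempty, so None never occurs. *)
Definition qcol (col : V -> V -> 'I_k) (M : {set V})
    (A B : qvert col M) : option 'I_k :=
  match [pick x in val A], [pick y in val B] with
  | Some x, Some y => Some (col x y)
  | _, _ => None
  end.

End Mod.

From mathcomp Require Import all_boot all_fingroup.
Set Implicit Arguments. Unset Strict Implicit. Unset Printing Implicit Defensive.

(* Choosing one vertex in each part of P_max(M) identifies the quotient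
   G[M]/P_max(M) with the subgraph of G induced by these representatives:
   the parts are pairwise disjoint, so distinct parts get distinct
   representatives, and the quotient colour is by definition the colour
   between representatives.  An induced subgraph of a permutation graph is a
   permutation graph: restrict the labeling and each permutation to the chosen
   vertices and compress their values to an initial segment. *)

Section Rank.
Variables (W : finType) (g : W -> nat).

Lemma rank_subproof (u : W) : #|[set w | g w < g u]| < #|W|.
Proof.
rewrite -cardsT; apply: proper_card; rewrite properT.
by apply/negP => /eqP/setP/(_ u); rewrite !inE ltnn.
Qed.

Definition rank (u : W) : 'I_#|W| := Ordinal (rank_subproof u).

Lemma ltn_rank u v : (rank u < rank v) = (g u < g v).
Proof.
case: (ltnP (g u) (g v)) => [guv | gvu].
  apply: proper_card; apply/properP; split; last by exists u; rewrite !inE ?ltnn.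
  by apply/subsetP => w; rewrite !inE => /ltn_trans; apply.
apply/negbTE; rewrite -leqNgt; apply: subset_leq_card.
by apply/subsetP => w; rewrite !inE => /leq_trans; apply.
Qed.

Hypothesis g_inj : injective g.

Lemma rank_inj : injective rank.
Proof.
move=> u v ruv; apply: g_inj.
by case: (ltngtP (g u) (g v)) => //; rewrite -ltn_rank ruv ltnn.
Qed.

Lemma rank_bij : bijective rank.
Proof. by apply: (inj_card_bij rank_inj); rewrite card_ord. Qed.

End Rank.

Section InducedPermGraph.
Variables (V W : finType) (f : W -> V) (l : V -> 'I_#|V|).
Hypotheses (f_inj : injective f) (l_inj : injective l).

Definition induced_label : W -> 'I_#|W| := rank (fun w => nat_of_ord (l (f w))).

Lemma induced_label_bij : bijective induced_label.
Proof. by apply: rank_bij => u v /val_inj/l_inj/f_inj. Qed.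

Lemma simple_perm_graph_induced (E : rel V) (pi : {perm 'I_#|V|}) :
  simple_perm_graph E l pi ->
  exists pi' : {perm 'I_#|W|},
    simple_perm_graph (fun u v => E (f u) (f v)) induced_label pi'.
Proof.
move=> E_pi; have [label_inv labelK labelKV] := induced_label_bij.
pose pos w := nat_of_ord ((pi^-1)%g (l (f w))).
have pos_inj : injective pos by move=> u v /val_inj/perm_inj/l_inj/f_inj.
have pos_rank_inj : injective (rank pos \o label_inv).
  by move=> i j /rank_inj-/(_ pos_inj) eq_ij; rewrite -(labelKV i) eq_ij labelKV.
exists (perm pos_rank_inj)^-1%g => u v lt_vu.
rewrite invgK !permE /= !labelK ltn_rank.
by apply: E_pi; move: lt_vu; rewrite ltn_rank.
Qed.

End InducedPermGraph.

Lemma simple_perm_graph_empty (V : finType) (l : V -> 'I_#|V|) :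
  simple_perm_graph (fun _ _ => false) l 1%g.
Proof. by move=> u v lt_vu; rewrite invg1 !perm1 ltnNge ltnW. Qed.

Section CecPermGraph.
Variables (V : finType) (K : eqType).

Lemma eq_cec_perm_graph (col1 col2 : V -> V -> K) :
  col1 =2 col2 -> cec_perm_graph col1 -> cec_perm_graph col2.
Proof.
move=> col12 [l [l_bij perm_col1]]; exists l; split=> // i.
have [pi pi_col1] := perm_col1 i; exists pi => u v lt_vu.
by rewrite -col12; apply: pi_col1.
Qed.

Lemma cec_perm_graph_Some (col : V -> V -> K) :
  cec_perm_graph col -> cec_perm_graph (fun u v => Some (col u v)).
Proof.
move=> [l [l_bij perm_col]]; exists l; split=> // -[i|].
  by have [pi pi_col] := perm_col i; exists pi.
by exists 1%g; apply: simple_perm_graph_empty.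
Qed.

Lemma cec_perm_graph_induced (W : finType) (col : V -> V -> K) (f : W -> V) :
  injective f -> cec_perm_graph col ->
  cec_perm_graph (fun u v => col (f u) (f v)).
Proof.
move=> f_inj [l [l_bij perm_col]].
exists (induced_label f l); split; first exact/induced_label_bij/bij_inj.
move=> i; have [pi pi_col] := perm_col i.
exact: (simple_perm_graph_induced f_inj (bij_inj l_bij) pi_col).
Qed.

End CecPermGraph.

Section Quotient.
Variables (V : finType) (k : nat) (col : V -> V -> 'I_k) (M : {set V}).
Hypothesis strong_M : strong_module col M.

Lemma strong_module_laminar (X Y : {set V}) :
  strong_module col X -> strong_module col Y ->
  [|| X \subset Y, Y \subset X | [disjoint X & Y]].
Proof. by case/and3P=> _ _ /forallP/(_ Y) + /and3P[_ mod_Y _]; rewrite mod_Y. Qed.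

Lemma Pmax_subset_eq (X Y : {set V}) :
  X \in Pmax col M -> Y \in Pmax col M -> X \subset Y -> X = Y.
Proof.
rewrite !inE => /and3P[_ _ /forallP/(_ Y) max_X] /and3P[strong_Y prop_Y _] sXY.
apply/eqP; apply: contraT => neXY.
by move: max_X; rewrite strong_Y properEneq neXY sXY prop_Y.
Qed.

Lemma qparts_strong (X : {set V}) : X \in qparts col M -> strong_module col X.
Proof.
by rewrite /qparts; case: ifP => _; rewrite inE; [move/eqP-> | case/and3P].
Qed.

Lemma qparts_disjoint (X Y : {set V}) (x : V) :
  X \in qparts col M -> Y \in qparts col M -> x \in X -> x \in Y -> X = Y.
Proof.
rewrite /qparts; case: ifP => _; first by rewrite !inE => /eqP-> /eqP->.
move=> PX PY xX xY.
have /or3P[sXY | sYX | dXY] : [|| X \subset Y, Y \subset X | [disjoint X & Y]].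
- by apply: strong_module_laminar; move: PX PY; rewrite !inE => /and3P[] + _ _ /and3P[].
- exact: Pmax_subset_eq.
- exact/esym/Pmax_subset_eq.
- by move/pred0P: dXY => /(_ x); rewrite /= xX xY.
Qed.

Lemma qcol_induced :
  exists2 rep : qvert col M -> V, injective rep &
    forall A B, qcol A B = Some (col (rep A) (rep B)).
Proof.
have /and3P[/set0Pn[x0 _] _ _] := strong_M.
pose rep (A : qvert col M) := odflt x0 [pick x in val A].
have pick_rep (A : qvert col M) : [pick x in val A] = Some (rep A) /\ rep A \in val A.
  rewrite /rep; case: pickP => [x Ax | A0] //.
  have /and3P[/set0Pn[x Ax] _ _] := qparts_strong (valP A).
  by move: (A0 x); rewrite Ax.
exists rep => [A B repAB | A B]; last by rewrite /qcol !(proj1 (pick_rep _)).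
apply: val_inj; apply: (qparts_disjoint (valP A) (valP B) (proj2 (pick_rep A))).
by rewrite repAB; exact: (proj2 (pick_rep B)).
Qed.

End Quotient.

Theorem proposition4p4 (V : finType) (k : nat) (col : V -> V -> 'I_k) :
  complete_edge_colored col ->
  cec_perm_graph col ->
  forall M : {set V}, strong_module col M ->
    cec_perm_graph (@qcol V k col M).
Proof.
move=> _ perm_col M strong_M.
have [rep rep_inj qcolE] := qcol_induced strong_M.
apply: eq_cec_perm_graph (fun A B => esym (qcolE A B)) _.
exact/cec_perm_graph_Some/cec_perm_graph_induced.
Qed.
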